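(* Let $X$ be a real Banach space and $\psi:X\to\mathbb{R}$ a continuous convex function with $\psi(0)=0\le\psi(x)$ for all $x\in X$, which is not constant on any line. Let $C=\{x\in X:\psi(x)\le1\}$, and let $(x_n)_{n\in\mathbb{N}}\subset\partial C$ (the boundary of $C$) and $\xi_n\in\partial\psi(x_n)$ be such that $$X\setminus C=\bigcup_{n=1}^\infty\{y\in X:\langle\xi_n,y-x_n\rangle>0\}.$$ Then $\{\xi_n:n\in\mathbb{N}\}$ separates the points of $X$: for every $v\in X\setminus\{0\}$ there is $n$ with $\langle\xi_n,v\rangle\neq0$.
   Context: $\partial\psi(x)=\{\xi\in X^*:\psi(y)\ge\psi(x)+\langle\xi,y-x\rangle \text{ for all } y\in X\}$. ''Not constant on any line'' means there are no $x,v\in X$, $v\neq 0$, with $t\mapsto\psi(x+tv)$ constant on $\mathbb{R}$. *)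

From Stdlib Require Import Reals.
Open Scope R_scope.

Record NormedSpace := MkNormedSpace {
  carrier :> Type;
  vzero : carrier;
  vadd : carrier -> carrier -> carrier;
  vopp : carrier -> carrier;
  vscal : R -> carrier -> carrier;
  vnorm : carrier -> R;
  vadd_assoc : forall x y z, vadd x (vadd y z) = vadd (vadd x y) z;
  vadd_comm : forall x y, vadd x y = vadd y x;
  vadd_zero : forall x, vadd x vzero = x;
  vadd_opp : forall x, vadd x (vopp x) = vzero;
  vscal_one : forall x, vscal 1 x = x;
  vscal_assoc : forall a b x, vscal a (vscal b x) = vscal (a * b) x;
  vscal_distr_v : forall a x y, vscal a (vadd x y) = vadd (vscal a x) (vscal a y);
  vscal_distr_s : forall a b x, vscal (a + b) x = vadd (vscal a x) (vscal b x);
  vnorm_zero_iff : forall x, vnorm x = 0 <-> x = vzero;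
  vnorm_scal : forall a x, vnorm (vscal a x) = Rabs a * vnorm x;
  vnorm_triangle : forall x y, vnorm (vadd x y) <= vnorm x + vnorm y
}.

Arguments vzero {_}.
Arguments vadd {_} _ _.
Arguments vopp {_} _.
Arguments vscal {_} _ _.
Arguments vnorm {_} _.

Definition vsub {X : NormedSpace} (x y : X) : X := vadd x (vopp y).

Definition complete (X : NormedSpace) : Prop :=
  forall u : nat -> X,
    (forall eps, 0 < eps -> exists N, forall m n, (N <= m)%nat -> (N <= n)%nat ->
        vnorm (vsub (u m) (u n)) < eps) ->
    exists l : X, forall eps, 0 < eps -> exists N, forall n, (N <= n)%nat ->
        vnorm (vsub (u n) l) < eps.

Definition Banach (X : NormedSpace) : Prop := complete X.

Definition continuous_fun {X : NormedSpace} (f : X -> R) : Prop :=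
  forall x eps, 0 < eps -> exists delta, 0 < delta /\
    forall y, vnorm (vsub y x) < delta -> Rabs (f y - f x) < eps.

Definition convex_fun {X : NormedSpace} (f : X -> R) : Prop :=
  forall x y t, 0 <= t <= 1 ->
    f (vadd (vscal t x) (vscal (1 - t) y)) <= t * f x + (1 - t) * f y.

Definition linear_fun {X : NormedSpace} (xi : X -> R) : Prop :=
  (forall x y, xi (vadd x y) = xi x + xi y) /\
  (forall a x, xi (vscal a x) = a * xi x).

Definition in_dual {X : NormedSpace} (xi : X -> R) : Prop :=
  linear_fun xi /\ continuous_fun xi.

Definition in_subdiff {X : NormedSpace} (psi : X -> R) (x : X) (xi : X -> R) : Prop :=
  in_dual xi /\ forall y, psi y >= psi x + xi (vsub y x).

Definition not_constant_on_lines {X : NormedSpace} (psi : X -> R) : Prop :=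
  ~ (exists x v : X, v <> vzero /\
       forall t s : R, psi (vadd x (vscal t v)) = psi (vadd x (vscal s v))).

Definition in_closure {X : NormedSpace} (C : X -> Prop) (x : X) : Prop :=
  forall eps, 0 < eps -> exists y, C y /\ vnorm (vsub y x) < eps.

Definition in_interior {X : NormedSpace} (C : X -> Prop) (x : X) : Prop :=
  exists eps, 0 < eps /\ forall y, vnorm (vsub y x) < eps -> C y.

Definition in_boundary {X : NormedSpace} (C : X -> Prop) (x : X) : Prop :=
  in_closure C x /\ ~ in_interior C x.

(* If every xi n vanished at v, then, since membership in C is decided by the
   signs of the xi n (y - x n), the set C would be invariant under translation
   by multiples of v; as 0 lies in C, psi would be bounded by 1 on the whole
   line R v.  A convex function bounded above on a line is constant on it,
   contradicting the assumption on lines. *)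
From Stdlib Require Import Reals Lra Classical.
Open Scope R_scope.

Definition convex_real_fun (g : R -> R) : Prop :=
  forall a b t, 0 <= t <= 1 -> g (t * a + (1 - t) * b) <= t * g a + (1 - t) * g b.

Lemma convex_real_fun_bounded_above_le {g : R -> R} {M : R} :
  convex_real_fun g -> (forall t, g t <= M) -> forall t s, g t <= g s.
Proof.
  intros Hconv Hbound t s.
  destruct (Rle_dec (g t) (g s)) as [Hle | Hgt]; [exact Hle | exfalso].
  set (d := g t - g s).
  assert (Hd : 0 < d) by (unfold d; lra).
  assert (HM : 0 <= M - g s) by (pose proof (Hbound s); lra).
  (* t is the point at ratio 1/k on the segment from s to u; a large k forces g u > M *)
  set (k := 1 + (M - g s + 1) / d).
  assert (Hkd : k * d = d + (M - g s + 1)) by (unfold k; field; lra).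
  assert (Hk : 1 <= k).
  { unfold k. assert (0 < (M - g s + 1) / d) by (apply Rdiv_lt_0_compat; lra). lra. }
  set (u := s + k * (t - s)).
  assert (Hinv : 0 <= / k <= 1).
  { split; [left; apply Rinv_0_lt_compat; lra |].
    rewrite <- Rinv_1. apply Rinv_le_contravar; lra. }
  pose proof (Hconv u s (/ k) Hinv) as Hseg.
  replace (/ k * u + (1 - / k) * s) with t in Hseg by (unfold u; field; lra).
  assert (Hscaled : k * g t <= g u + (k - 1) * g s).
  { apply Rmult_le_compat_l with (r := k) in Hseg; [| lra].
    replace (k * (/ k * g u + (1 - / k) * g s)) with (g u + (k - 1) * g s)
      in Hseg by (field; lra).
    exact Hseg. }
  pose proof (Hbound u).
  assert (k * d <= M - g s) by (unfold d; lra).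
  lra.
Qed.

Lemma vadd_shuffle {X : NormedSpace} (a b c d : X) :
  vadd (vadd a b) (vadd c d) = vadd (vadd a c) (vadd b d).
Proof.
  rewrite <- !vadd_assoc. f_equal.
  rewrite !vadd_assoc. f_equal. apply vadd_comm.
Qed.

Lemma convex_fun_restrict_line {X : NormedSpace} {psi : X -> R} (x v : X) :
  convex_fun psi -> convex_real_fun (fun t => psi (vadd x (vscal t v))).
Proof.
  intros Hconv a b t Ht.
  replace (vadd x (vscal (t * a + (1 - t) * b) v))
    with (vadd (vscal t (vadd x (vscal a v))) (vscal (1 - t) (vadd x (vscal b v)))).
  - exact (Hconv _ _ t Ht).
  - rewrite !vscal_distr_v, vadd_shuffle, !vscal_assoc, <- !vscal_distr_s.
    now replace (t + (1 - t)) with 1 by ring; rewrite vscal_one.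
Qed.

Lemma convex_fun_bounded_above_on_line_const {X : NormedSpace} {psi : X -> R}
  {x v : X} {M : R} :
  convex_fun psi -> (forall t, psi (vadd x (vscal t v)) <= M) ->
  forall t s, psi (vadd x (vscal t v)) = psi (vadd x (vscal s v)).
Proof.
  intros Hconv Hbound t s.
  pose proof (convex_fun_restrict_line x v Hconv) as Hline.
  apply Rle_antisym; exact (convex_real_fun_bounded_above_le Hline Hbound _ _).
Qed.

Lemma halfspace_cover_translation_invariant {X : NormedSpace} {psi : X -> R}
  (x : nat -> X) (xi : nat -> X -> R) (w : X) :
  (forall n, linear_fun (xi n)) ->
  (forall y : X, ~ (psi y <= 1) <-> exists n, xi n (vsub y (x n)) > 0) ->
  (forall n, xi n w = 0) ->
  forall y, psi y <= 1 -> psi (vadd y w) <= 1.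
Proof.
  intros Hlin Hcover Hw y Hy.
  apply NNPP. intros Hout.
  apply (proj2 (Hcover y)); [| exact Hy].
  destruct (proj1 (Hcover _) Hout) as [n Hn]. exists n.
  destruct (Hlin n) as [Hadd _].
  unfold vsub in *. rewrite !Hadd, Hw in Hn. rewrite Hadd. lra.
Qed.

Theorem mainTheorem8 (X : NormedSpace) (HX : Banach X) (psi : X -> R)
  (Hcont : continuous_fun psi) (Hconv : convex_fun psi)
  (H0 : psi vzero = 0) (Hnonneg : forall x : X, 0 <= psi x)
  (Hlines : not_constant_on_lines psi)
  (x : nat -> X) (xi : nat -> X -> R)
  (Hxbd : forall n, in_boundary (fun y : X => psi y <= 1) (x n))
  (Hxi : forall n, in_subdiff psi (x n) (xi n))
  (Hcover : forall y : X, ~ (psi y <= 1) <-> exists n, xi n (vsub y (x n)) > 0) :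
  forall v : X, v <> vzero -> exists n, xi n v <> 0.
Proof.
  intros v Hv.
  apply NNPP. intros Hnone.
  assert (Hker : forall n, xi n v = 0).
  { intro n. apply NNPP. intro Hn. apply Hnone. now exists n. }
  assert (Hlin : forall n, linear_fun (xi n)) by (intro n; apply (Hxi n)).
  assert (Hbound : forall t, psi (vadd vzero (vscal t v)) <= 1).
  { intro t.
    apply (halfspace_cover_translation_invariant x xi (vscal t v) Hlin Hcover).
    - intro n. destruct (Hlin n) as [_ Hscal]. now rewrite Hscal, Hker, Rmult_0_r.
    - lra. }
  apply Hlines. exists vzero, v. split; [exact Hv |].
  exact (convex_fun_bounded_above_on_line_const Hconv Hbound).
Qed.
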